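(* Let $k$ and $s$ be positive integers and suppose that $K_{k+1,s+1}$ cannot be $k$-page embedded. Let $n$ be a positive integer and $q:=n\bmod s$. Then \[ \nu_k(K_{k+1,n}) \ge q\binom{\frac{n-q}{s}+1}{2} + (s-q)\binom{\frac{n-q}{s}}{2}. \]
   Context: A book with $k$ pages consists of a line (the spine) and $k$ half-planes (the pages) whose common boundary is the spine. A $k$-page drawing of a graph places all vertices on the spine and draws each edge inside a single page; a $k$-page embedding is a $k$-page drawing without crossings. $\nu_k(G)$ is the minimum number of crossings over all $k$-page drawings of $G$. Convention: $\binom{a}{b}=0$ whenever $a<b$. *)

From mathcomp Require Import all_boot.
Set Implicit Arguments. Unset Strict Implicit. Unset Printing Implicit Defensive.

(* Complete bipartite graph K_{a,b}: vertex set 'I_a + 'I_b,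
   edge set 'I_a * 'I_b (edge (i,j) joins inl i and inr j). *)
Definition bvert (a b : nat) : finType := ('I_a + 'I_b)%type.
Definition bedge (a b : nat) : finType := ('I_a * 'I_b)%type.

(* A k-page drawing of K_{a,b}: the vertices are placed at pairwise distinct
   positions on the spine (pos injective), and each edge is put on a page. *)
Record book_drawing (k a b : nat) := BookDrawing {
  bd_pos  : bvert a b -> nat;
  bd_page : bedge a b -> 'I_k;
  bd_inj  : injective bd_pos
}.

Section Crossings.
Variables (k a b : nat) (D : book_drawing k a b).

Definition elo (e : bedge a b) : nat :=
  minn (bd_pos D (inl e.1)) (bd_pos D (inr e.2)).
Definition ehi (e : bedge a b) : nat :=
  maxn (bd_pos D (inl e.1)) (bd_pos D (inr e.2)).

(* e and f (in this order) cross: same page and endpoints strictly interleave,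
   with e's left endpoint leftmost. Each crossing pair is counted once. *)
Definition ecross (e f : bedge a b) : bool :=
  (bd_page D e == bd_page D f) && [&& elo e < elo f, elo f < ehi e & ehi e < ehi f].

Definition crossings : nat := #|[set ef : bedge a b * bedge a b | ecross ef.1 ef.2]|.
End Crossings.

Definition k_page_embeddable (k a b : nat) : Prop :=
  exists D : book_drawing k a b, crossings D = 0.

Definition nu_ge (k a b m : nat) : Prop :=
  forall D : book_drawing k a b, m <= crossings D.

From mathcomp Require Import all_boot zify.
Set Implicit Arguments. Unset Strict Implicit. Unset Printing Implicit Defensive.

(* Fix a k-page drawing of K_{k+1,n} and call two right vertices in conflict
   when some crossing involves an edge at each of them. The drawing restricted
   to a conflict-free set of right vertices has no crossing, so as K_{k+1,s+1}
   is not k-page embeddable the conflict graph has independence number at most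
   s. By Turán's theorem it then has at least as many edges as s disjoint
   balanced cliques on n vertices, which is the stated bound, and every
   conflicting pair is witnessed by its own crossing. *)

(* Pairs inside the parts of a balanced partition of n items into s parts:
   dealing the items round-robin, item j meets j %/ s earlier items of its part. *)
Definition part_pairs (n s : nat) : nat := \sum_(j < n) j %/ s.

Lemma part_pairs0 s : part_pairs 0 s = 0.
Proof. by rewrite /part_pairs big_ord0. Qed.

Lemma part_pairsS n s : part_pairs n.+1 s = part_pairs n s + n %/ s.
Proof. by rewrite /part_pairs big_ord_recr. Qed.

Lemma part_pairs1 n : part_pairs n 1 = 'C(n, 2).
Proof.
rewrite -bin2_sum big_mkord; apply: eq_bigr => j _; exact: divn1.
Qed.

Lemma mul2n_bin2 n : 2 * 'C(n, 2) = n * n.-1.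
Proof.
elim: n => [|n IHn] //; rewrite binS bin1 mulnDr IHn; case: n {IHn} => //= n; nia.
Qed.

Lemma part_pairs_split t n a : 0 < t -> a <= n ->
  part_pairs n t.+1 <= 'C(a, 2) + part_pairs (n - a) t.
Proof.
move=> t_gt0; elim: n a => [|n IHn] a le_an.
  by move: le_an; rewrite leqn0 => /eqP ->; rewrite part_pairs0.
rewrite part_pairsS; set m := n %/ t.+1.
have le_mt_n : m * t.+1 <= n by rewrite leq_divM.
have [le_am | lt_ma] := leqP a m.
  have le_an' : a <= n by apply: leq_trans le_am _; rewrite leq_div.
  rewrite subSn // part_pairsS.
  have : m <= (n - a) %/ t by rewrite leq_divRL //; nia.
  have := IHn a le_an'; lia.
have -> : n.+1 - a = n - a.-1 by lia.
have := IHn a.-1 (ltac:(lia)).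
have -> : a = a.-1.+1 by lia.
rewrite binS bin1 /=; lia.
Qed.

Section BalancedPartition.
Variable s : nat.
Hypothesis s_gt0 : 0 < s.

Lemma part_pairs_mulnD m r : r <= s ->
  part_pairs (m * s + r) s = s * 'C(m, 2) + r * m.
Proof.
elim: m r => [|m IHm] r le_rs.
  rewrite mul0n add0n muln0 addn0 muln0.
  elim: r le_rs => [|r IHr] lt_rs; first by rewrite part_pairs0.
  by rewrite part_pairsS IHr ?divn_small //; lia.
elim: r le_rs => [|r IHr] lt_rs.
  rewrite addn0 mul0n addn0 binS bin1 mulnDr mulSn addnC IHm //; lia.
rewrite addnS part_pairsS IHr; last lia.
rewrite divnMDl // divn_small; lia.
Qed.

Lemma part_pairs_balanced n : let q := n %% s in
  part_pairs n s = q * 'C((n - q) %/ s + 1, 2) + (s - q) * 'C((n - q) %/ s, 2).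
Proof.
move=> q; have lt_qs : q < s by rewrite ltn_mod.
have -> : n - q = n %/ s * s by rewrite /q {1}(divn_eq n s) addnK.
rewrite mulnK // {1}(divn_eq n s) part_pairs_mulnD 1?ltnW //.
rewrite addn1 binS bin1 -[s in s * _](subnK (ltnW lt_qs)); lia.
Qed.

End BalancedPartition.

Section Turan.
Variables (V : finType) (adj : rel V).
Hypothesis adjC : symmetric adj.

Definition deg (A : {set V}) (x : V) : nat := #|[set y in A | adj x y]|.
Definition deg_sum (A : {set V}) : nat := \sum_(x in A) deg A x.
Definition indep (I : {set V}) : Prop := {in I &, forall x y, x != y -> ~~ adj x y}.
Definition indep_le (A : {set V}) (s : nat) : Prop :=
  forall I : {set V}, I \subset A -> indep I -> #|I| <= s.

Lemma deg_subset (A B : {set V}) x : A \subset B -> deg A x <= deg B x.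
Proof.
move=> sAB; apply/subset_leq_card/subsetP => y.
by rewrite !inE => /andP[/(subsetP sAB) -> ->].
Qed.

Lemma deg_sum_split (A S : {set V}) d : S \subset A ->
  {in S, forall x, d <= deg A x} -> #|S| * d + deg_sum (A :\: S) <= deg_sum A.
Proof.
move=> sSA deg_ge; rewrite /deg_sum (bigID [in S] [in A]) /=; apply: leq_add.
  rewrite (eq_bigl [in S]) => [|x]; last by rewrite andb_idl // => /(subsetP sSA).
  by rewrite -sum_nat_const; apply: leq_sum => x /deg_ge.
rewrite [leqRHS](eq_bigl [in A :\: S]) => [|x]; last by rewrite inE andbC.
by apply: leq_sum => x _; apply/deg_subset/subsetDl.
Qed.

Lemma indep_setU1 v (I : {set V}) :
  indep I -> {in I, forall y, ~~ adj v y} -> indep (v |: I).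
Proof.
move=> indI nadj x y; rewrite !inE => /predU1P[-> | xI] /predU1P[-> | yI].
- by rewrite eqxx.
- by move=> _; apply: nadj.
- by move=> _; rewrite adjC; apply: nadj.
- exact: indI.
Qed.

Lemma indep_le0 (A : {set V}) : indep_le A 0 -> A = set0.
Proof.
move=> A_le0; apply/setP => x; rewrite inE; apply/negbTE/negP => xA.
suff: #|[set x]| <= 0 by rewrite cards1.
apply: A_le0; first by rewrite sub1set.
by move=> y z; rewrite !inE => /eqP-> /eqP->; rewrite eqxx.
Qed.

Lemma indep_le_nonnbhd (A : {set V}) v t : v \in A -> indep_le A t.+1 ->
  indep_le (A :\: (v |: [set y in A | adj v y])) t.
Proof.
move=> vA A_le I sIR indI.
have sIA : I \subset A by apply: subset_trans sIR (subsetDl _ _).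
have vI : v \notin I by apply/negP => /(subsetP sIR); rewrite !inE eqxx.
have nadj : {in I, forall y, ~~ adj v y}.
  move=> y /(subsetP sIR); rewrite !inE => /andP[]; rewrite negb_or => /andP[_].
  by rewrite negb_and => /orP[/negP // | //].
have := A_le _ _ (indep_setU1 indI nadj).
by rewrite cardsU1 vI ltnS; apply; rewrite subUset sub1set vA.
Qed.

(* Turán's theorem in its complementary form; the induction removes the closed
   neighbourhood of a vertex of minimum degree. *)
Lemma turan s (A : {set V}) : indep_le A s -> 2 * part_pairs #|A| s <= deg_sum A.
Proof.
elim: s A => [|t IHt] A A_le.
  by rewrite /part_pairs big1 // => j _; rewrite divn0.
have [-> | [v0 v0A]] := set_0Vmem A; first by rewrite cards0 part_pairs0.
pose v := [arg min_(x < v0 in A) deg A x].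
have [vA vmin] : v \in A /\ {in A, forall y, deg A v <= deg A y}.
  by rewrite /v; case: arg_minnP.
set d := deg A v; set S := v |: [set y in A | adj v y]; set R := A :\: S.
have sSA : S \subset A.
  by apply/subsetP => y; rewrite !inE => /predU1P[-> | /andP[]].
have card_S : #|S| <= d.+1 by rewrite cardsU1 /d /deg; case: (_ \notin _).
have card_R : #|R| = #|A| - #|S| by rewrite cardsD (setIidPr sSA).
have R_le : indep_le R t by apply: indep_le_nonnbhd.
have step : part_pairs #|A| t.+1 <= 'C(#|S|, 2) + part_pairs #|R| t.
  case: t {IHt A_le} R_le => [|t] R_le; last first.
    by rewrite card_R part_pairs_split // subset_leq_card.
  have R0 := indep_le0 R_le.
  have eq_AS : #|A| = #|S|.
    by move: card_R (subset_leq_card sSA); rewrite R0 cards0; lia.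
  by rewrite eq_AS R0 cards0 part_pairs0 addn0 part_pairs1.
have := deg_sum_split sSA (fun x xS => vmin x (subsetP sSA x xS)); rewrite -/d -/R.
have : #|S| * #|S|.-1 <= #|S| * d by rewrite leq_mul2l; apply/orP; right; lia.
have := IHt R R_le; have := mul2n_bin2 #|S|; lia.
Qed.

End Turan.

Lemma sum_card_rel (T : finType) (P : rel T) :
  \sum_x #|[set y | P x y]| = #|[set p : T * T | P p.1 p.2]|.
Proof.
rewrite -sum1_card; under eq_bigr => x _ do rewrite -sum1_card.
by rewrite pair_big_dep /=; apply: eq_bigl => p; rewrite !inE.
Qed.

Lemma ecross_neq2 k a b (D : book_drawing k a b) e f : ecross D e f -> e.2 != f.2.
Proof.
rewrite /ecross /elo /ehi => /andP[_ /and3P[]].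
by case: e f => [i j] [i' j'] /=; case: eqP => [-> | //]; lia.
Qed.

Section ConflictGraph.
Variables (k a n : nat) (D : book_drawing k a n).

Definition cross_at (x y : 'I_n) : bool := [exists ef : bedge a n * bedge a n,
  [&& ecross D ef.1 ef.2, ef.1.2 == x & ef.2.2 == y]].

Definition conflict (x y : 'I_n) : bool := cross_at x y || cross_at y x.

Lemma conflictC : symmetric conflict.
Proof. by move=> x y; rewrite /conflict orbC. Qed.

Lemma card_cross_at : #|[set p : 'I_n * 'I_n | cross_at p.1 p.2]| <= crossings D.
Proof.
pose ends (ef : bedge a n * bedge a n) := (ef.1.2, ef.2.2).
apply: leq_trans (leq_imset_card ends _); apply/subset_leq_card/subsetP => -[x y].
rewrite inE /= => /existsP[ef /and3P[cr /eqP <- /eqP <-]].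
by apply/imsetP; exists ef; rewrite ?inE.
Qed.

Lemma deg_sum_conflict : deg_sum conflict setT <= 2 * crossings D.
Proof.
rewrite /deg_sum /deg (eq_bigl xpredT) => [|x]; last by rewrite inE.
apply: (@leq_trans (\sum_x (#|[set y | cross_at x y]| + #|[set y | cross_at y x]|))).
  apply: leq_sum => x _; apply: leq_trans (leq_card_setU _ _).
  by apply/subset_leq_card/subsetP => y; rewrite !inE.
rewrite big_split /= !sum_card_rel mul2n -addnn; apply: leq_add; first exact: card_cross_at.
apply: leq_trans card_cross_at.
apply: leq_trans (leq_imset_card (fun p : 'I_n * 'I_n => (p.2, p.1)) _).
apply/subset_leq_card/subsetP => -[x y]; rewrite inE /= => cr.
by apply/imsetP; exists (y, x); rewrite ?inE.
Qed.

End ConflictGraph.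

Section Restriction.
Variables (k a b m : nat) (D : book_drawing k a b) (g : 'I_m -> 'I_b).
Hypothesis g_inj : injective g.

Definition restr_pos (v : bvert a m) : nat :=
  match v with inl i => bd_pos D (inl i) | inr j => bd_pos D (inr (g j)) end.

Lemma restr_pos_inj : injective restr_pos.
Proof.
by move=> [i|j] [i'|j'] /= /bd_inj // [] => [-> | /g_inj ->].
Qed.

Definition restr_drawing : book_drawing k a m :=
  BookDrawing (fun e => bd_page D (e.1, g e.2)) restr_pos_inj.

Lemma ecross_restr e f :
  ecross restr_drawing e f = ecross D (e.1, g e.2) (f.1, g f.2).
Proof. by []. Qed.

End Restriction.

Lemma conflict_indep_le k a n s (D : book_drawing k a n) :
  ~ k_page_embeddable k a s.+1 -> indep_le (conflict D) [set: 'I_n] s.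
Proof.
move=> not_emb I _ indI; rewrite leqNgt; apply/negP => lt_sI.
pose g (j : 'I_s.+1) : 'I_n := enum_val (widen_ord lt_sI j).
have g_inj : injective g by move=> j j' /enum_val_inj /(congr1 val) /= /ord_inj.
case: not_emb; exists (restr_drawing D g_inj); apply/eqP.
rewrite cards_eq0; apply/eqP/setP => -[e f]; rewrite !inE ecross_restr.
apply/negbTE/negP => cr; move: (ecross_neq2 cr) => /= neq_gg.
have /negP := indI _ _ (enum_valP _) (enum_valP _) neq_gg; apply.
by apply/orP; left; apply/existsP; exists ((e.1, g e.2), (f.1, g f.2)); rewrite cr !eqxx.
Qed.

Theorem proposition13 (k s n : nat) :
  0 < k -> 0 < s -> ~ k_page_embeddable k k.+1 s.+1 -> 0 < n ->
  let q := n %% s in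
  nu_ge k k.+1 n (q * 'C((n - q) %/ s + 1, 2) + (s - q) * 'C((n - q) %/ s, 2)).
Proof.
move=> _ s_gt0 not_emb _ q D.
rewrite -part_pairs_balanced //.
have := turan (@conflictC _ _ _ D) (@conflict_indep_le _ _ _ _ D not_emb).
by rewrite cardsT card_ord => /leq_trans/(_ (deg_sum_conflict D)); rewrite leq_pmul2l.
Qed.
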